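(* Let $\omega=e^{i\theta}$ with $-\pi<\theta\le\pi$. (a) Put $\omega^{1/4}=e^{i\theta/4}$. If $0<|\omega^{1/4}-z|<c_1$ for some $z\in\mathbb{C}$ with $|z|=1$ and some $0<c_1<\sqrt2$, then $|\omega-z^4|>c_2|\omega^{1/4}-z|$, where $c_2=(2-c_1^2)\sqrt{4-c_1^2}$. (b) If $0<|\omega-z^4|<c_0$ for some $z\in\mathbb{C}$ with $|z|=1$ and some $0<c_0\le2$, then $0<|\omega^{1/4}-z|<c_3$ for some fourth root $\omega^{1/4}$ of $\omega$, where $c_3$ is the smallest positive real root of $x^8-8x^6+20x^4-16x^2+c_0^2$. *)

From mathcomp Require Import all_boot all_order all_algebra.
From mathcomp Require Import all_classical all_reals all_analysis.
From mathcomp Require Export complex.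
Set Implicit Arguments. Unset Strict Implicit. Unset Printing Implicit Defensive.
Import Order.TTheory GRing.Theory Num.Theory.
Local Open Scope ring_scope.
Local Open Scope complex_scope.

Definition cexpi (R : realType) (t : R) : R[i] := (cos t) +i* (sin t).

Definition p3p7 (R : realType) (c0 : R) : {poly R} :=
  'X^8 - 8%:P * 'X^6 + 20%:P * 'X^4 - 16%:P * 'X^2 + (c0 ^+ 2)%:P.

Definition smallest_pos_root (R : realType) (p : {poly R}) (c : R) : Prop :=
  0 < c /\ root p c /\ (forall x : R, 0 < x < c -> ~~ root p x).

From mathcomp Require Import all_boot all_order all_algebra.
From mathcomp Require Import all_classical all_reals all_analysis.
From mathcomp Require Import complex.
From mathcomp Require Import ring lra.
Set Implicit Arguments. Unset Strict Implicit. Unset Printing Implicit Defensive.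
Import Order.TTheory GRing.Theory Num.Theory.
Local Open Scope ring_scope.
Local Open Scope complex_scope.

(* Dividing by a fourth root a of omega reduces everything to the point
   t = z / a of the unit circle.  With d = |1 - t| one has 2 Re t = 2 - d^2,
   and 1 - t^4 = (1 - t)(1 + t)(1 + t^2) gives
     |1 - t^4|^2 = d^2 (4 - d^2) (2 - d^2)^2 =: chord4 d,
   while the polynomial of (b) is c0^2 - chord4 x.
   (a): (4 - d^2) (2 - d^2)^2 decreases in d on [0, sqrt 2].
   (b): some fourth root w of omega puts z / w in the sector |Im| <= Re, so
   that |w - z|^2 <= 2 - sqrt 2; chord4 increases on that range, hence
   |w - z| >= c3 would force |omega - z^4| >= c0. *)

Lemma normr1_of_exprn_eq (F : numDomainType) (n : nat) (w a : F) :
  w ^+ n = a ^+ n -> (0 < n)%N -> `|a| = 1 -> `|w| = 1.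
Proof.
move=> wa n_gt0 a1; apply/eqP; rewrite -(pexpr_eq1 n_gt0) //.
by rewrite -normrX wa normrX a1 expr1n.
Qed.

Lemma normrB_unit (F : numFieldType) (a z : F) :
  `|a| = 1 -> `|a - z| = `|1 - z / a|.
Proof.
move=> a1; have a_neq0 : a != 0 by rewrite -normr_eq0 a1 oner_neq0.
have -> : a - z = a * (1 - z / a) by field.
by rewrite normrM a1 mul1r.
Qed.

Definition chord4 (R : rcfType) (u : R) : R :=
  u ^+ 2 * (4 - u ^+ 2) * (2 - u ^+ 2) ^+ 2.

Lemma root_p3p7 (R : realType) (c0 u : R) :
  root (p3p7 c0) u = (chord4 u == c0 ^+ 2).
Proof.
have p3p7E : (p3p7 c0).[u] = c0 ^+ 2 - chord4 u.
  rewrite /p3p7 /chord4 !(hornerD, hornerN, hornerM, hornerC, hornerXn, hornerX).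
  ring.
by rewrite rootE p3p7E subr_eq0 eq_sym.
Qed.

Section ChordsOfFourthPowers.
Variable R : rcfType.
Implicit Types (c d u v : R) (a k t w x z : R[i]).
Local Notation normc := (@Normc.normc R).
Local Notation Re := complex.Re.
Local Notation Im := complex.Im.

Lemma chord4E u : chord4 u = (2 - u ^+ 2) ^+ 2 * (4 - (2 - u ^+ 2) ^+ 2).
Proof. by rewrite /chord4; ring. Qed.

Lemma chord4_le u v : 0 <= u -> u <= v -> v ^+ 2 <= 2 - Num.sqrt 2 ->
  chord4 u <= chord4 v.
Proof.
move=> u_ge0 uv v_small; rewrite !chord4E.
have sqrt2_ge0 : 0 <= Num.sqrt 2 :> R := sqrtr_ge0 2.
have sqr_sqrt2 : Num.sqrt 2 ^+ 2 = 2 :> R by rewrite sqr_sqrtr.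
have u2v2 : u ^+ 2 <= v ^+ 2 by rewrite ler_pXn2r ?nnegrE // (le_trans u_ge0).
have v_ge2 : 2 <= (2 - v ^+ 2) ^+ 2 by nra.
have vu : (2 - v ^+ 2) ^+ 2 <= (2 - u ^+ 2) ^+ 2 by nra.
(* x |-> x (4 - x) is decreasing on [2, +oo) *)
nra.
Qed.

Lemma chord4_gt d c : 0 < d < c -> c ^+ 2 < 2 ->
  ((2 - c ^+ 2) * Num.sqrt (4 - c ^+ 2) * d) ^+ 2 < chord4 d.
Proof.
move=> /andP[d_gt0 dc] c2_lt2.
rewrite !exprMn sqr_sqrtr; last by lra.
have d2c2 : d ^+ 2 < c ^+ 2 by rewrite ltr_pXn2r ?nnegrE ?ltW // (lt_trans d_gt0).
have : (2 - c ^+ 2) ^+ 2 * (4 - c ^+ 2) < (2 - d ^+ 2) ^+ 2 * (4 - d ^+ 2).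
  by apply: ltr_pM; nra.
have d2_gt0 : 0 < d ^+ 2 by rewrite exprn_gt0.
rewrite /chord4; nra.
Qed.

Lemma normr_normc x : `|x| = (normc x)%:C.
Proof. by case: x => a b; rewrite normc_def. Qed.

Lemma sqr_normc x : normc x ^+ 2 = Re x ^+ 2 + Im x ^+ 2.
Proof. by case: x => a b /=; rewrite sqr_sqrtr // addr_ge0 ?sqr_ge0. Qed.

Lemma normc1_Re2_Im2 t : `|t| = 1 -> Re t ^+ 2 + Im t ^+ 2 = 1.
Proof. by move=> t1; apply: complexI; rewrite add_Re2_Im2 t1 expr1n. Qed.

Lemma sqr_normc_1B t : `|t| = 1 -> normc (1 - t) ^+ 2 = 2 - 2 * Re t.
Proof.
move/normc1_Re2_Im2; rewrite sqr_normc.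
by case: t => a b /= h; lra.
Qed.

Lemma sqr_normc_1D t : `|t| = 1 -> normc (1 + t) ^+ 2 = 2 + 2 * Re t.
Proof.
move/normc1_Re2_Im2; rewrite sqr_normc.
by case: t => a b /= h; lra.
Qed.

Lemma sqr_normc_1DX2 t : `|t| = 1 -> normc (1 + t ^+ 2) ^+ 2 = 4 * Re t ^+ 2.
Proof.
move/normc1_Re2_Im2; rewrite sqr_normc.
by case: t => a b /= h; rewrite expr2 /=; nra.
Qed.

Lemma sqr_normc_1BX4 t : `|t| = 1 ->
  normc (1 - t ^+ 4) ^+ 2 = chord4 (normc (1 - t)).
Proof.
move=> t1; have -> : 1 - t ^+ 4 = (1 - t) * (1 + t) * (1 + t ^+ 2) by ring.
rewrite /chord4 !Normc.normcM !exprMn sqr_normc_1B // sqr_normc_1D //.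
by rewrite sqr_normc_1DX2 //; ring.
Qed.

Lemma normc_ge0 x : 0 <= normc x.
Proof. by case: x => a b; apply: sqrtr_ge0. Qed.

Lemma sqr_normc_BX4 a z : `|a| = 1 -> `|z| = 1 ->
  normc (a ^+ 4 - z ^+ 4) ^+ 2 = chord4 (normc (a - z)).
Proof.
move=> a1 z1; have a4 : `|a ^+ 4| = 1 by rewrite normrX a1 expr1n.
have t1 : `|z / a| = 1 by rewrite normrM normfV a1 z1 invr1 mulr1.
have -> : normc (a - z) = normc (1 - z / a).
  by apply: complexI; rewrite -!normr_normc normrB_unit.
have -> : normc (a ^+ 4 - z ^+ 4) = normc (1 - (z / a) ^+ 4).
  by apply: complexI; rewrite -!normr_normc normrB_unit // expr_div_n.
exact: sqr_normc_1BX4.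
Qed.

Lemma exists_rotation_sector t : exists2 k, k ^+ 4 = 1 & `|Im (k * t)| <= Re (k * t).
Proof.
have i4 : 'i ^+ 4 = 1 :> R[i] by rewrite (exprM _ 2 2) sqr_i; ring.
case: t => x y; have [yx|xy] := lerP `|y| `|x|.
- move: yx; have [_ yx|_ yx] := ger0P x.
  + by exists 1; rewrite ?expr1n // mul1r.
  + by exists (-1); [ring | rewrite mulN1r /= normrN].
- move/ltW: xy; have [_ xy|_ xy] := ger0P y.
  + exists (- 'i); first by rewrite -i4; ring.
    by simpc; rewrite normrN.
  + by exists 'i; simpc.
Qed.

Lemma sector_chord t : `|t| = 1 -> `|Im t| <= Re t ->
  normc (1 - t) ^+ 2 <= 2 - Num.sqrt 2.
Proof.
move=> t1 sector; rewrite sqr_normc_1B //.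
have Re_ge0 : 0 <= Re t := le_trans (normr_ge0 _) sector.
have Im2_le : Im t ^+ 2 <= Re t ^+ 2.
  by rewrite -[Im t ^+ 2]real_normK ?num_real // ler_pXn2r ?nnegrE.
have : Num.sqrt 2 <= 2 * Re t.
  rewrite -[X in _ <= X]ger0_norm ?mulr_ge0 // -sqrtr_sqr ler_sqrt ?sqr_ge0 //.
  by have := normc1_Re2_Im2 t1; lra.
lra.
Qed.

Lemma exists_root4_sector a z : `|a| = 1 -> `|z| = 1 ->
  exists2 w, w ^+ 4 = a ^+ 4 & normc (w - z) ^+ 2 <= 2 - Num.sqrt 2.
Proof.
move=> a1 z1; have [k k4 sector] := exists_rotation_sector (z / a).
have a_neq0 : a != 0 by rewrite -normr_eq0 a1 oner_neq0.
have k_neq0 : k != 0 by apply: contra_eq_neq k4 => ->; rewrite expr0n eq_sym oner_neq0.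
set w := a / k; have w4 : w ^+ 4 = a ^+ 4 by rewrite expr_div_n k4 divr1.
have w1 := normr1_of_exprn_eq w4 isT a1.
have rot : k * (z / a) = z / w by rewrite /w; field; rewrite k_neq0.
rewrite {}rot in sector; exists w => //.
have -> : normc (w - z) = normc (1 - z / w).
  by apply: complexI; rewrite -!normr_normc normrB_unit.
by apply: sector_chord sector; rewrite normrM normfV w1 z1 invr1 mulr1.
Qed.

Lemma normrBX4_gt a z c : `|a| = 1 -> `|z| = 1 -> 0 < c < Num.sqrt 2 ->
  0 < `|a - z| < c%:C ->
  ((2 - c ^+ 2) * Num.sqrt (4 - c ^+ 2))%:C * `|a - z| < `|a ^+ 4 - z ^+ 4|.
Proof.
move=> a1 z1 /andP[c_gt0 c_lt]; rewrite !normr_normc -rmorphM !ltcR => dist_bounds.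
have c2_lt2 : c ^+ 2 < 2.
  by rewrite -[X in _ < X](@sqr_sqrtr _ 2) // ltr_pXn2r ?nnegrE ?ltW.
have lhs_ge0 : 0 <= (2 - c ^+ 2) * Num.sqrt (4 - c ^+ 2) * normc (a - z).
  by rewrite !mulr_ge0 ?sqrtr_ge0 ?normc_ge0 ?subr_ge0 ?ltW.
rewrite -(ltr_pXn2r (isT : (0 < 2)%N)) ?nnegrE ?normc_ge0 //.
by rewrite sqr_normc_BX4 //; apply: chord4_gt.
Qed.

Lemma exists_root4_normrB_lt a z c0 c3 : `|a| = 1 -> `|z| = 1 ->
  0 < c3 -> chord4 c3 = c0 ^+ 2 -> 0 < `|a ^+ 4 - z ^+ 4| < c0%:C ->
  exists w, w ^+ 4 = a ^+ 4 /\ 0 < `|w - z| < c3%:C.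
Proof.
move=> a1 z1 c3_gt0 c3_chord /andP[e_gt0 e_lt].
have [w w4 w_near] := exists_root4_sector a1 z1.
have w1 := normr1_of_exprn_eq w4 isT a1.
exists w; split => //; apply/andP; split.
  rewrite normr_gt0 subr_eq0; apply: contraTneq e_gt0 => wz.
  by rewrite -w4 wz subrr normr0 ltxx.
move: e_lt; rewrite -w4 !normr_normc !ltcR => e_lt.
rewrite ltNge; apply/negP => c3_le.
have c0_ge0 : 0 <= c0 := le_trans (normc_ge0 _) (ltW e_lt).
have := chord4_le (ltW c3_gt0) c3_le w_near.
by rewrite -sqr_normc_BX4 // c3_chord leNgt ltr_pXn2r ?nnegrE ?normc_ge0 ?e_lt.
Qed.

End ChordsOfFourthPowers.

Section ComplexExponential.
Variable R : realType.
Implicit Types s t : R.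

Lemma cexpiD s t : cexpi s * cexpi t = cexpi (s + t).
Proof. by rewrite /cexpi; simpc; rewrite cosD sinD; congr (_ +i* _); ring. Qed.

Lemma cexpiXn t n : cexpi t ^+ n = cexpi (t *+ n).
Proof.
elim: n => [|n IHn]; first by rewrite /cexpi cos0 sin0.
by rewrite exprS IHn cexpiD mulrS.
Qed.

Lemma normr_cexpi t : `|cexpi t| = 1.
Proof. by rewrite normc_def /= cos2Dsin2 sqrtr1. Qed.

End ComplexExponential.

Theorem lemma3p7 (R : realType) (theta : R) (htheta : - pi < theta <= pi) :
  (forall (z : R[i]) (c1 : R),
      `|z| = 1 -> 0 < c1 < Num.sqrt 2 ->
      0 < `|cexpi (theta / 4) - z| < c1%:C ->
      ((2 - c1 ^+ 2) * Num.sqrt (4 - c1 ^+ 2))%:C * `|cexpi (theta / 4) - z|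
        < `|cexpi theta - z ^+ 4|)
  /\
  (forall (z : R[i]) (c0 c3 : R),
      `|z| = 1 -> 0 < c0 <= 2 -> smallest_pos_root (p3p7 c0) c3 ->
      0 < `|cexpi theta - z ^+ 4| < c0%:C ->
      exists w : R[i], w ^+ 4 = cexpi theta /\ 0 < `|w - z| < c3%:C).
Proof.
have root4 : cexpi (theta / 4) ^+ 4 = cexpi theta.
  by rewrite cexpiXn -mulr_natr; congr cexpi; field.
have a1 := normr_cexpi (theta / 4).
rewrite -root4; split.
  by move=> z c1 z1 c1_bounds; apply: normrBX4_gt.
move=> z c0 c3 z1 _ [c3_gt0 [c3_root _]].
by apply: exists_root4_normrB_lt => //; apply/eqP; rewrite -root_p3p7.
Qed.
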